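(* For an abelian group $A$, the following are equivalent: (i) $A$ is finitely generated; (ii) $A$ is SB-generated; (iii) $A$ has uncountable cofinality.
   Context: A subset of a group $G$ is strongly bounded if it has finite diameter in every left-invariant metric on $G$; a group is SB-generated if it is generated by a strongly bounded subset. A group has uncountable cofinality if it cannot be written as the union of a strictly increasing sequence $H_1\subsetneq H_2\subsetneq\cdots$ of subgroups. *)

From mathcomp Require Import all_boot all_algebra.
From Stdlib Require Import Reals.
Set Implicit Arguments. Unset Strict Implicit. Unset Printing Implicit Defensive.
Import GRing.Theory.
Local Open Scope ring_scope.

Section Defs.
Variable G : zmodType.

Definition is_subgroup (H : G -> Prop) : Prop :=
  H 0 /\ (forall x y, H x -> H y -> H (x + y)) /\ (forall x, H x -> H (- x)).

Definition generates (S : G -> Prop) : Prop :=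
  forall H : G -> Prop, is_subgroup H -> (forall x, S x -> H x) -> forall x, H x.

Definition left_invariant_metric (d : G -> G -> R) : Prop :=
  (forall x y, d x y = R0 <-> x = y) /\
  (forall x y, d x y = d y x) /\
  (forall x y z, Rle (d x z) (Rplus (d x y) (d y z))) /\
  (forall g x y, d (g + x) (g + y) = d x y).

Definition strongly_bounded (S : G -> Prop) : Prop :=
  forall d : G -> G -> R, left_invariant_metric d ->
    exists M : R, forall x y, S x -> S y -> Rle (d x y) M.

Definition finitely_generated : Prop :=
  exists s : seq G, generates (fun x => x \in s).

Definition SB_generated : Prop :=
  exists S : G -> Prop, strongly_bounded S /\ generates S.

Definition uncountable_cofinality : Prop :=
  ~ exists H : nat -> (G -> Prop),
      (forall n, is_subgroup (H n)) /\
      (forall n, (forall x, H n x -> H n.+1 x) /\ exists x, H n.+1 x /\ ~ H n x) /\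
      (forall x, exists n, H n x).

End Defs.

(* (i) => (ii): a finite set is bounded in every metric.
   (ii) => (iii): if A is the union of a strictly increasing chain of subgroups
   H_n, the level l(x) = min {n | x \in H_n} is symmetric and subadditive, so
   d(x, y) = l(y - x) + [x != y] is a left-invariant metric; a d-bounded
   generating set lies in one H_n, which is then all of A.
   (iii) => (i): now every increasing chain of subgroups covering A is
   eventually A.  For p = 0 or p prime, this and Zorn's lemma give a finite s
   such that every a has a multiple j a in pA + <s> with p not dividing j:
   otherwise choose e_n outside the p-saturation of pA + <e_0, ..., e_(n-1)>,
   and a maximal subgroup K containing pA that keeps every e_n outside the
   saturation of K + <e_0, ..., e_(n-1)>; these saturations form a chain
   covering A.  For p = 0, A / <s> is torsion, and the chain {a | n! a \in <s>}
   bounds its exponent by some N.  For p prime, Bezout gives A = pA + <s>;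
   multiplying along the prime factors of N gives A = NA + <t>, so A = <t, s>. *)
From mathcomp Require Import all_boot all_algebra.
From mathcomp Require Import zify boolp classical_sets.
From Stdlib Require Import Reals.
Set Implicit Arguments. Unset Strict Implicit. Unset Printing Implicit Defensive.
Import GRing.Theory.
Local Open Scope ring_scope.
Local Open Scope classical_set_scope.

Lemma seq_bounded (T : eqType) (f : T -> R) (s : seq T) :
  exists M, forall x, x \in s -> Rle (f x) M.
Proof.
elim: s => [|y s [M HM]]; first by exists R0.
exists (Rmax (f y) M) => x; rewrite inE => /predU1P [->|/HM fxM]; first exact: Rmax_l.
exact: Rle_trans fxM (Rmax_r _ _).
Qed.

Section AbelianGroup.
Variable A : zmodType.
Implicit Types (K L H : A -> Prop) (s t : seq A) (x y z : A).

Section Subgroup.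
Variables (K : A -> Prop) (sgK : is_subgroup K).

Lemma subgroup0 : K 0. Proof. by case: sgK. Qed.

Lemma subgroupD x y : K x -> K y -> K (x + y).
Proof. by case: sgK => _ [+ _]; apply. Qed.

Lemma subgroupN x : K x -> K (- x).
Proof. by case: sgK => _ [_]; apply. Qed.

Lemma subgroupB x y : K x -> K y -> K (x - y).
Proof. by move=> Kx Ky; apply/subgroupD/subgroupN. Qed.

Lemma subgroupBr x y : K (x - y) -> K y -> K x.
Proof. by move=> Kxy Ky; rewrite -(subrK y x); apply: subgroupD. Qed.

Lemma subgroupMn x n : K x -> K (x *+ n).
Proof.
move=> Kx; elim: n => [|n IH]; first by rewrite mulr0n; apply: subgroup0.
by rewrite mulrSr; apply: subgroupD.
Qed.

Lemma subgroupMz x j : K (x *~ j) <-> K (x *+ absz j).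
Proof.
case: j => n; first by rewrite -pmulrn.
rewrite NegzE mulrNz -pmulrn; split; last exact: subgroupN.
by move/subgroupN; rewrite opprK.
Qed.

End Subgroup.

Lemma subgroup_preim_mulrn K n : is_subgroup K -> is_subgroup (fun x => K (x *+ n)).
Proof.
move=> sgK; split; first by rewrite mul0rn; apply: subgroup0.
split; first by move=> x y Kx Ky; rewrite mulrnDl; apply: subgroupD.
by move=> x Kx; rewrite mulNrn; apply: subgroupN.
Qed.

Lemma chain_mono (H : nat -> A -> Prop) :
  (forall n x, H n x -> H n.+1 x) -> forall m n : nat, (m <= n)%nat -> forall x, H m x -> H n x.
Proof.
move=> Hinc m n /subnK <-; elim: (n - m)%nat => [//|i IH] x Hx.
by rewrite addSn; apply/Hinc/IH.
Qed.

Definition multiples (n : nat) : A -> Prop := fun y => exists z, y = z *+ n.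

Lemma multiples_subgroup n : is_subgroup (multiples n).
Proof.
split; first by exists 0; rewrite mul0rn.
split; first by move=> _ _ [x ->] [y ->]; exists (x + y); rewrite mulrnDl.
by move=> _ [x ->]; exists (- x); rewrite mulNrn.
Qed.

Lemma multiples_mulrn n x : multiples n (x *+ n). Proof. by exists x. Qed.

(* [span L s] is L + <s>: x lies in it iff x - \sum_i j_i s_i \in L for some
   integers j_i. *)
Fixpoint span L s : A -> Prop :=
  if s is y :: s' then fun x => exists j : int, span L s' (x - y *~ j) else L.

Section Span.
Variable L : A -> Prop.

Lemma span_subgroup s : is_subgroup L -> is_subgroup (span L s).
Proof.
move=> sgL; elim: s => [|y s IH] //=; split; [|split].
- by exists 0; rewrite mulr0z subr0; apply: subgroup0.
- move=> x z [j Hx] [k Hz]; exists (j + k).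
  by rewrite mulrzDr opprD addrACA; apply: subgroupD.
- move=> x [j Hx]; exists (- j).
  by rewrite mulrNz -opprD; apply: subgroupN.
Qed.

Lemma span_base s x : L x -> span L s x.
Proof. by elim: s x => [|y s IH] x //= Lx; exists 0; rewrite mulr0z subr0; apply: IH. Qed.

Lemma span_cons s y x : span L s x -> span L (y :: s) x.
Proof. by exists 0; rewrite mulr0z subr0. Qed.

Lemma span_mem s y : is_subgroup L -> y \in s -> span L s y.
Proof.
move=> sgL; elim: s => [|z s IH] //; rewrite inE => /predU1P [->|ys].
  by exists 1; rewrite mulr1z subrr; apply: subgroup0; apply: span_subgroup.
exact/span_cons/IH.
Qed.

Lemma span_min s K : is_subgroup K -> L `<=` K ->
  (forall y, y \in s -> K y) -> forall x, span L s x -> K x.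
Proof.
move=> sgK LK; elim: s => [|y s IH] sK x //=; first exact: LK.
case=> j Hx; apply: (subgroupBr sgK (y := y *~ j)).
  by apply: IH Hx => z zs; apply: sK; rewrite inE zs orbT.
by apply/(subgroupMz sgK); apply: subgroupMn => //; apply: sK; rewrite inE eqxx.
Qed.

Lemma span_cat s t x : span L (s ++ t) x <-> span (span L t) s x.
Proof. by elim: s x => [|y s IH] x //=; split; case=> j Hx; exists j; apply/IH. Qed.

Lemma span_span1 y s z : span (span L [:: y]) s z -> exists j, span L s (z - y *~ j).
Proof.
elim: s z => [|w s IH] z //= [k /IH [j Hz]].
by exists j, k; rewrite addrAC.
Qed.

Lemma span_bigcup (F : set (A -> Prop)) s x :
  span (\bigcup_(K in F) K) s x -> exists2 K, F K & span K s x.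
Proof.
elim: s x => [|y s IH] x /=; first by case=> K FK Kx; exists K.
by case=> j /IH [K FK Hx]; exists K => //; exists j.
Qed.

End Span.

Lemma span_mono L L' s x : L `<=` L' -> span L s x -> span L' s x.
Proof.
move=> LL'; elim: s x => [|y s IH] x /=; first exact: LL'.
by case=> j Hx; exists j; apply: IH.
Qed.

Lemma span_mulrn L s n x : span L s x ->
  span (fun w => exists2 v, L v & w = v *+ n) [seq y *+ n | y <- s] (x *+ n).
Proof.
elim: s x => [|y s IH] x /=; first by exists x.
case=> j /IH Hx; exists j.
by move: Hx; rewrite mulrnBl !pmulrn mulrzAC.
Qed.

Lemma span_multiplesM m n s t :
  (forall x, span (multiples m) s x) -> (forall x, span (multiples n) t x) ->
  forall x, span (multiples (m * n)) (s ++ [seq y *+ m | y <- t]) x.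
Proof.
move=> As At x; apply/span_cat/(span_mono _ (As x)) => _ [y ->].
apply: span_mono (span_mulrn m (At y)) => _ [_ [z ->] ->].
by exists z; rewrite -mulrnA mulnC.
Qed.

(* For p = 0 the condition on j only says j != 0. *)
Definition saturation (p : nat) L : A -> Prop :=
  fun x => exists2 j, ~~ (p %| j)%nat & L (x *+ j).

Section Saturation.
Variables (p : nat) (p_prime0 : p = 0%nat \/ prime p).

Lemma prime0_dvd1 : ~~ (p %| 1)%nat.
Proof. by case: p_prime0 => [->|/Euclid_dvd1 ->]. Qed.

Lemma prime0_dvdM a b : (p %| a * b)%nat = (p %| a)%nat || (p %| b)%nat.
Proof. by case: p_prime0 => [->|/Euclid_dvdM //]; rewrite !dvd0n muln_eq0. Qed.

Lemma saturation_base L x : L x -> saturation p L x.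
Proof. by exists 1%nat; rewrite ?mulr1n ?prime0_dvd1. Qed.

Lemma saturation_mono L L' x : L `<=` L' -> saturation p L x -> saturation p L' x.
Proof. by move=> LL' [j pj Lx]; exists j => //; apply: LL'. Qed.

Lemma saturation_subgroup L : is_subgroup L -> is_subgroup (saturation p L).
Proof.
move=> sgL; split; first by apply: saturation_base; apply: subgroup0.
split; last by move=> x [j pj Lx]; exists j; rewrite // mulNrn; apply: subgroupN.
move=> x y [j pj Lx] [k pk Ly]; exists (j * k)%nat; first by rewrite prime0_dvdM negb_or pj.
rewrite mulrnDl mulrnA [(j * k)%nat]mulnC mulrnA.
by apply: (subgroupD sgL); apply: (subgroupMn sgL).
Qed.

Lemma saturation_multiples_prime s : prime p ->
  (forall x, saturation p (span (multiples p) s) x) -> forall x, span (multiples p) s x.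
Proof.
move=> pp sat x; have [j pj Hxj] := sat x.
have sgS := span_subgroup s (multiples_subgroup p).
have [u _] := Bezoutl j (prime_gt0 pp).
rewrite (eqP (_ : coprime p j)) ?prime_coprime // => /dvdnP [q Eq].
have -> : x = x *+ q *+ p - x *+ j *+ u.
  by rewrite -mulrnA -Eq mulrnDr mulr1n mulnC mulrnA addrK.
apply: (subgroupB sgS); last exact: (subgroupMn sgS).
by apply: span_base; apply: multiples_mulrn.
Qed.

End Saturation.

Lemma bigcup_chain_subgroup (F : set (A -> Prop)) :
  F !=set0 -> total_on F subset -> (forall K, F K -> is_subgroup K) ->
  is_subgroup (\bigcup_(K in F) K).
Proof.
move=> [K0 FK0] Ftot Fsg; split; first by exists K0 => //; apply: subgroup0 (Fsg _ FK0).
split; last by move=> x [K FK Kx]; exists K => //; apply: subgroupN (Fsg _ FK) _ Kx.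
move=> x y [K1 FK1 K1x] [K2 FK2 K2y].
case: (Ftot _ _ FK1 FK2) => [K12|K21].
  by exists K2 => //; apply: subgroupD (Fsg _ FK2) _ _ (K12 _ K1x) K2y.
by exists K1 => //; apply: subgroupD (Fsg _ FK1) _ _ K1x (K21 _ K2y).
Qed.

Lemma subgroup_zorn (D : A -> Prop) (Q : (A -> Prop) -> Prop) :
  is_subgroup D -> Q D ->
  (forall F : set (A -> Prop), F !=set0 -> total_on F subset ->
     (forall K, F K -> is_subgroup K /\ Q K) -> Q (\bigcup_(K in F) K)) ->
  exists K, [/\ is_subgroup K, D `<=` K, Q K &
    forall K', is_subgroup K' -> Q K' -> K `<=` K' -> K' `<=` K].
Proof.
move=> sgD QD Qchain.
(* Zorn_bigcup also needs a bound for the empty chain, hence the alternative set0. *)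
pose P K := K = set0 \/ [/\ is_subgroup K, D `<=` K & Q K].
have [K [PK Kmax]] : exists K, P K /\ forall K', K `<` K' -> ~ P K'.
  apply: Zorn_bigcup => F FP Ftot.
  pose F' := [set K | F K /\ K !=set0].
  have -> : \bigcup_(K in F) K = \bigcup_(K in F') K.
    by apply/seteqP; split=> x [K FK Kx]; exists K => //; [split=> //; exists x|case: FK].
  have F'P K : F' K -> [/\ is_subgroup K, D `<=` K & Q K].
    by case=> /FP [-> [] //|].
  have [[K0 F'K0]|F'0] := pselect (F' !=set0); last first.
    by left; apply/seteqP; split=> // x [K F'K _]; apply: F'0; exists K.
  have [_ DK0 _] := F'P _ F'K0.
  right; split.
  - apply: bigcup_chain_subgroup => [|K1 K2 [FK1 _] [FK2 _]|K /F'P []] //.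
      by exists K0.
    exact: Ftot.
  - by move=> x Dx; exists K0 => //; apply: DK0.
  - apply: Qchain => [|K1 K2 [FK1 _] [FK2 _]|K /F'P [] //]; first by exists K0.
    exact: Ftot.
have [K0|[sgK DK QK]] := PK.
  exfalso; apply: (Kmax D); last by right; split.
  by rewrite K0; split=> [//|/(_ 0 (subgroup0 sgD))].
exists K; split=> // K' sgK' QK' KK'; apply: contrapT => K'K.
by apply: (Kmax K'); [split|right; split=> // x /DK /KK'].
Qed.

Lemma ucof_chain_stationary (H : nat -> A -> Prop) :
  uncountable_cofinality A -> (forall n, is_subgroup (H n)) ->
  (forall n x, H n x -> H n.+1 x) -> (forall x, exists n, H n x) ->
  exists n, forall x, H n x.
Proof.
move=> UC Hsg Hinc Hcov; apply: contrapT => /forallNP Hfull.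
have Hmono := chain_mono Hinc.
have [f Hf] : {f : nat -> nat & forall n, exists2 x, H (f n) x & ~ H n x}.
  apply: (@choice _ _ (fun n k => exists2 x, H k x & ~ H n x)) => n.
  have /existsNP [x Hnx] := Hfull n.
  by have [k Hkx] := Hcov x; exists k, x.
have lt_f n : (n < f n)%nat.
  have [x Hfx Hnx] := Hf n; rewrite ltnNge; apply/negP => le_fn.
  exact/Hnx/(Hmono _ _ le_fn).
pose g k := iter k f 0%nat.
have le_g k : (k <= g k)%nat by elim: k => //= k IH; apply: leq_ltn_trans IH (lt_f _).
apply: UC; exists (fun k => H (g k)); split=> //; split=> [k|x].
  split; first by apply/Hmono/ltnW/lt_f.
  by have [x Hx Hnx] := Hf (g k); exists x.
by have [n Hn] := Hcov x; exists n; apply: Hmono (le_g n) _ Hn.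
Qed.

Lemma ucof_torsion_bounded (B : A -> Prop) :
  uncountable_cofinality A -> is_subgroup B ->
  (forall x, exists2 j, (0 < j)%nat & B (x *+ j)) ->
  exists2 N, (0 < N)%nat & forall x, B (x *+ N).
Proof.
move=> UC sgB torsion.
have [n Hn] : exists n, forall x, B (x *+ n`!).
  apply: ucof_chain_stationary => // [n|n x Bx|x].
  - exact: subgroup_preim_mulrn.
  - by rewrite factS mulnC mulrnA; apply: subgroupMn.
  - have [j j_gt0 Bxj] := torsion x; exists j.
    have j_dvd : (j %| j`!)%nat by rewrite dvdn_fact // j_gt0 leqnn.
    by rewrite -(divnK j_dvd) mulnC mulrnA; apply: subgroupMn.
by exists n`!; first exact: fact_gt0.
Qed.

Section AvoidingSequence.
Variables (p : nat) (next : seq A -> A).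
Hypothesis p_prime0 : p = 0%nat \/ prime p.

Fixpoint picked n : seq A := if n is n'.+1 then next (picked n') :: picked n' else [::].

Definition pick n := next (picked n).

Definition avoiding K := forall n, ~ saturation p (span K (picked n)) (pick n).

Lemma avoiding_bigcup (F : set (A -> Prop)) :
  (forall K, F K -> avoiding K) -> avoiding (\bigcup_(K in F) K).
Proof. by move=> Favoid n [j pj /span_bigcup [K FK HK]]; apply: (Favoid K FK n); exists j. Qed.

Lemma maximal_avoiding_cover K :
  is_subgroup K -> multiples p `<=` K -> avoiding K ->
  (forall K', is_subgroup K' -> avoiding K' -> K `<=` K' -> K' `<=` K) ->
  forall x, exists n, saturation p (span K (picked n)) x.
Proof.
move=> sgK pK avK Kmax x.
have sgKx := span_subgroup [:: x] sgK.
have [avKx|] := pselect (avoiding (span K [:: x])).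
  exists 0%nat; apply: saturation_base => //; apply: (Kmax _ sgKx avKx).
    by move=> z; apply: span_base.
  by apply: span_mem; rewrite ?mem_head.
move=> /existsNP [n /contrapT [i pi /span_span1 [j Hj]]].
have sgS := span_subgroup (picked n) sgK.
have sgS' := span_subgroup (picked n.+1) sgK.
have S'xj : span K (picked n.+1) (x *~ j).
  rewrite -(subKr (pick n *+ i) (x *~ j)); apply: (subgroupB sgS') (span_cons _ Hj).
  by apply: (subgroupMn sgS'); apply: span_mem; rewrite ?mem_head.
have [pj|npj] := boolP (p %| absz j)%nat; last first.
  by exists n.+1, (absz j) => //; apply/(subgroupMz sgS').
(* Otherwise j x \in pA <= K, so pick n would be saturated over K + <picked n>. *)
exfalso; apply: (avK n); exists i => //.
have Sxj : span K (picked n) (x *~ j).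
  apply/(subgroupMz sgS); apply: span_base; apply: pK.
  by rewrite -(divnK pj) mulrnA; apply: multiples_mulrn.
by rewrite -(subrK (x *~ j) (pick n *+ i)); apply: subgroupD sgS _ _ Hj Sxj.
Qed.

End AvoidingSequence.

Lemma ucof_saturated_span p : p = 0%nat \/ prime p -> uncountable_cofinality A ->
  exists s, forall x, saturation p (span (multiples p) s) x.
Proof.
move=> p_prime0 UC; apply: contrapT => /forallNP nospan.
have [next Hnext] : {next : seq A -> A &
    forall s, ~ saturation p (span (multiples p) s) (next s)}.
  apply: (@choice _ _ (fun s a => ~ saturation p (span (multiples p) s) a)) => s.
  exact/existsNP/nospan.
have [|F _ _ FQ|K [sgK pK avK Kmax]] :=
  subgroup_zorn (multiples_subgroup p) (Q := avoiding p next).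
- by move=> n; apply: Hnext.
- by apply: avoiding_bigcup => K /FQ [].
have [n Hn] : exists n, forall x, saturation p (span K (picked next n)) x.
  apply: ucof_chain_stationary => // [n|n x|]; last exact: maximal_avoiding_cover.
    by apply: saturation_subgroup => //; apply: span_subgroup.
  by apply: saturation_mono => z; apply: span_cons.
exact: (avK n (Hn _)).
Qed.

Lemma ucof_span_multiples N : uncountable_cofinality A -> (0 < N)%nat ->
  exists t, forall x, span (multiples N) t x.
Proof.
move=> UC; elim/ltn_ind: N => N IH N_gt0.
have [N_le1|N_gt1] := leqP N 1.
  have -> : N = 1%nat by apply/eqP; rewrite eqn_leq N_le1.
  by exists [::] => x; exists x; rewrite mulr1n.
have p_prime := pdiv_prime N_gt1.
have [t Ht] : exists t, forall x, span (multiples (pdiv N)) t x.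
  have [t Ht] := ucof_saturated_span (or_intror p_prime) UC.
  by exists t; apply: saturation_multiples_prime.
have lt_M : (N %/ pdiv N < N)%nat by rewrite ltn_Pdiv ?prime_gt1.
have M_gt0 : (0 < N %/ pdiv N)%nat.
  by rewrite divn_gt0 ?prime_gt0 // dvdn_leq // pdiv_dvd.
have [s Hs] := IH _ lt_M M_gt0.
rewrite -(divnK (pdiv_dvd N)); exists (s ++ [seq y *+ (N %/ pdiv N)%nat | y <- t]).
exact: (span_multiplesM Hs Ht).
Qed.

Lemma ucof_finitely_generated : uncountable_cofinality A -> finitely_generated A.
Proof.
move=> UC; have [s Hs] := ucof_saturated_span (or_introl erefl) UC.
have [|N N_gt0 HN] := ucof_torsion_bounded UC (span_subgroup s (multiples_subgroup 0)).
  by move=> x; have [j j_gt0 Hj] := Hs x; exists j; rewrite // lt0n -dvd0n.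
have [t Ht] := ucof_span_multiples UC N_gt0.
exists (t ++ s) => H sgH tsH x.
have zero_H : multiples 0 `<=` H by move=> _ [z ->]; rewrite mulr0n; apply: subgroup0.
apply: (span_min sgH zero_H tsH); apply/span_cat; apply: span_mono (Ht x) => _ [y ->].
exact: HN.
Qed.

Definition length_metric (l : A -> nat) : A -> A -> R :=
  fun x y => INR (addn (l (y - x)) (x != y)).

Lemma length_metricP (l : A -> nat) :
  l 0 = 0%nat -> (forall x, l (- x) = l x) ->
  (forall x y, leq (l (x + y)) (l x + l y)%nat) ->
  left_invariant_metric (length_metric l).
Proof.
move=> l0 lN lD; rewrite /length_metric.
split; [|split; [|split]].
- move=> x y; split=> [/(INR_eq _ 0)|->]; last by rewrite subrr l0 eqxx.
  by move/eqP; rewrite addn_eq0 eqb0 => /andP [_ /negPn /eqP].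
- by move=> x y; rewrite -opprB lN eq_sym.
- move=> x y z; rewrite -plus_INR; apply/le_INR/leP.
  have -> : z - x = (y - x) + (z - y) by rewrite [RHS]addrC addrA subrK.
  have := lD (y - x) (z - y).
  by case: (eqVneq x y) => [->|_]; case: (x != z); case: (y != z); lia.
- by move=> g x y; rewrite opprD addrACA subrr add0r (inj_eq (addrI g)).
Qed.

Section Level.
Variable H : nat -> A -> Prop.
Hypotheses (Hsg : forall n, is_subgroup (H n))
  (Hinc : forall n x, H n x -> H n.+1 x) (Hcov : forall x, exists n, H n x).

Lemma chain_coverb x : exists n, `[< H n x >].
Proof. by have [n Hn] := Hcov x; exists n; apply/asboolP. Qed.

Definition level x := ex_minn (chain_coverb x).

Lemma level_mem x : H (level x) x.
Proof. by rewrite /level; case: ex_minnP => n /asboolP. Qed.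

Lemma level_min x n : H n x -> (level x <= n)%nat.
Proof. by move=> Hn; rewrite /level; case: ex_minnP => k _; apply; apply/asboolP. Qed.

Lemma level_le x n : (level x <= n)%nat -> H n x.
Proof. by move=> le_n; apply: chain_mono Hinc _ _ le_n _ (level_mem x). Qed.

Lemma level0 : level 0 = 0%nat.
Proof. by apply/eqP; rewrite -leqn0; apply/level_min/(subgroup0 (Hsg 0)). Qed.

Lemma levelN x : level (- x) = level x.
Proof.
apply/eqP; rewrite eqn_leq; apply/andP; split; apply: level_min.
  exact: (subgroupN (Hsg _) (level_mem x)).
by have := subgroupN (Hsg _) (level_mem (- x)); rewrite opprK.
Qed.

Lemma levelD x y : leq (level (x + y)) (level x + level y)%nat.
Proof. by apply/level_min/(subgroupD (Hsg _)); apply: level_le; rewrite ?leq_addr ?leq_addl. Qed.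

Lemma strongly_bounded_in_chain S : strongly_bounded S -> exists N, S `<=` H N.
Proof.
move=> SB; have [M HM] := SB _ (length_metricP level0 levelN levelD).
have [[s0 Ss0]|S0] := pselect (S !=set0); last first.
  by exists 0%nat => x Sx; exfalso; apply: S0; exists x.
have [N ltMN] := INR_unbounded M.
exists (N + level s0)%nat => x Sx; rewrite -(subrK s0 x).
have /INR_lt/ltP lt_xN : Rlt (INR (addn (level (x - s0)) (s0 != x))) (INR N).
  exact: Rle_lt_trans (HM _ _ Ss0 Sx) ltMN.
by apply: (subgroupD (Hsg _)); apply: level_le; lia.
Qed.

End Level.

Lemma sb_generated_ucof : SB_generated A -> uncountable_cofinality A.
Proof.
move=> [S [SB genS]] [H [Hsg [Hinc Hcov]]].
have [N SHN] := strongly_bounded_in_chain Hsg (fun n => (Hinc n).1) Hcov SB.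
by have [x [_ HNx]] := (Hinc N).2; apply/HNx/(genS _ (Hsg N) SHN).
Qed.

Lemma fg_sb_generated : finitely_generated A -> SB_generated A.
Proof.
case=> s gen; exists (fun x => x \in s); split=> // d _.
have [M HM] := seq_bounded (fun xy => d xy.1 xy.2) [seq (x, y) | x <- s, y <- s].
by exists M => x y xs ys; apply: (HM (x, y)); apply: allpairs_f.
Qed.

End AbelianGroup.

Theorem proposition2p7 (A : zmodType) :
  (finitely_generated A <-> SB_generated A) /\
  (SB_generated A <-> uncountable_cofinality A).
Proof.
have fg_sb := @fg_sb_generated A.
have sb_uc := @sb_generated_ucof A.
have uc_fg := @ucof_finitely_generated A.
split; split.
- exact: fg_sb.
- by move/sb_uc/uc_fg.
- exact: sb_uc.
- by move/uc_fg/fg_sb.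
Qed.
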